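(* Let $D$ be a Newton diagram in $2$ variables whose support $K$ has size $d$, is connected, and contains $(0,0)$. Let $k<d$ and suppose $K$ contains all $m\in\mathbb N_0^2$ with $|m|\le k-1$. Then there is an extension $D'$ of $D$ with $\#(D')\le\#(D)$ whose support contains all $m\in\mathbb N_0^2$ with $|m|\le k$.
   Context: For $m\in\mathbb Z^n$ write $|m|=m_1+\dots+m_n$; $e_1,\dots,e_n$ is the standard basis. A Newton diagram in $n$ variables is a function $D\colon\mathbb Z^n\to\{0,P,N\}$ ($P,N$ formal symbols) whose support $K=D^{-1}(\{P,N\})$ is a finite nonempty subset of $\mathbb N_0^n$. For $a\in\mathbb Z^n$ let $E(a)=\{a,a-e_1,\dots,a-e_n\}$; $E(a)$ is a node of $D$ if the image $D(E(a))$ equals $\{P\}$, $\{N\}$, $\{0,P\}$ or $\{0,N\}$. $\#(D)$ is the number of $a\in\mathbb Z^n$ for which $E(a)$ is a node. Two distinct points $m,m'$ are adjacent if $m-m'\in\{\pm e_j\}\cup\{e_j-e_k: j\ne k\}$; $K$ is connected if any two points of $K$ are joined by a path of successively adjacent points of $K$. The size of $K$ is $k-|a|+1$ where $k=\max_{m\in K}|m|$ and $a_j=\min_{m\in K}m_j$. A Newton diagram $D'$ with support $K'$ is an extension of $D$ if $K\subset K'$ and $D'|_K=D|_K$. *)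

From Stdlib Require Import ZArith List.
Import ListNotations.
Open Scope Z_scope.

Inductive sym : Type := S0 | SP | SN.

Definition pt : Type := (Z * Z)%type.

Definition diagram : Type := pt -> sym.

Definition in_supp (D : diagram) (m : pt) : Prop := D m <> S0.

Definition newton_diagram (D : diagram) : Prop :=
  (exists L : list pt, forall m, in_supp D m <-> In m L) /\
  (exists m, in_supp D m) /\
  (forall m, in_supp D m -> 0 <= fst m /\ 0 <= snd m).

Definition absm (m : pt) : Z := fst m + snd m.

Definition Eset (a : pt) : list pt :=
  [a; (fst a - 1, snd a); (fst a, snd a - 1)].

Definition image_eq (D : diagram) (a : pt) (S : list sym) : Prop :=
  forall s, In s S <-> exists x, In x (Eset a) /\ D x = s.

Definition is_node (D : diagram) (a : pt) : Prop :=
  image_eq D a [SP] \/ image_eq D a [SN] \/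
  image_eq D a [S0; SP] \/ image_eq D a [S0; SN].

Definition num_nodes (D : diagram) (c : nat) : Prop :=
  exists l : list pt, NoDup l /\ (forall a, In a l <-> is_node D a) /\
                      length l = c.

Definition adjacent (m m' : pt) : Prop :=
  let d := (fst m - fst m', snd m - snd m') in
  In d [(1,0); (-1,0); (0,1); (0,-1); (1,-1); (-1,1)].

Fixpoint adj_path (D : diagram) (x : pt) (p : list pt) : Prop :=
  match p with
  | [] => True
  | y :: p' => adjacent x y /\ in_supp D y /\ adj_path D y p'
  end.

Definition supp_connected (D : diagram) : Prop :=
  forall x y, in_supp D x -> in_supp D y ->
    exists p, adj_path D x p /\ last p x = y.

Definition supp_size (D : diagram) (d : Z) : Prop :=
  exists k a1 a2,
    (exists m, in_supp D m /\ absm m = k) /\ (forall m, in_supp D m -> absm m <= k) /\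
    (exists m, in_supp D m /\ fst m = a1) /\ (forall m, in_supp D m -> a1 <= fst m) /\
    (exists m, in_supp D m /\ snd m = a2) /\ (forall m, in_supp D m -> a2 <= snd m) /\
    d = k - (a1 + a2) + 1.

Definition extension (D' D : diagram) : Prop :=
  newton_diagram D' /\
  (forall m, in_supp D m -> in_supp D' m) /\
  (forall m, in_supp D m -> D' m = D m).

(* Since (0,0) is in K and
   K lies in N_0^2, the size of K is max |m| + 1, so K reaches a level >= k;
   adjacent points differ in level by at most one, so a path in K starting at
   (0,0) meets level k in some point (m0, k-m0).

   We fill every empty point (i, k-i) of level k by a nonzero value, the values
   alternating from each end of the diagonal towards the occupied point
   (m0, k-m0).  The nodes of the new diagram are mapped injectively to nodes of
   D: a node E(a) stays a node when the new values are erased, provided some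
   value on E(a) was already there; two consecutive new values never lie in a
   common node; the only nodes created from nothing are E(0,k+1) and E(k+1,0),
   and they are traded for E(0,k) and E(k,0), which are nodes of D but not of
   the extension. *)

From Stdlib Require Import ZArith List Lia Bool.
Import ListNotations.
Open Scope Z_scope.

Definition sym_eqb (s t : sym) : bool :=
  match s, t with S0, S0 | SP, SP | SN, SN => true | _, _ => false end.

Lemma sym_eqb_spec (s t : sym) : sym_eqb s t = true <-> s = t.
Proof. destruct s, t; simpl; split; congruence. Qed.

Definition memb (s : sym) (S : list sym) : bool := existsb (sym_eqb s) S.

Lemma memb_spec (s : sym) (S : list sym) : memb s S = true <-> In s S.
Proof.
  unfold memb; rewrite existsb_exists; split.
  - intros [t [Ht Hst]]; apply sym_eqb_spec in Hst; subst; exact Ht.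
  - intros Hs; exists s; split; [exact Hs | apply sym_eqb_spec; reflexivity].
Qed.

Definition same_set (S T : list sym) : bool :=
  forallb (fun s => Bool.eqb (memb s S) (memb s T)) [S0; SP; SN].

Lemma same_set_spec (S T : list sym) :
  same_set S T = true <-> forall s, In s S <-> In s T.
Proof.
  unfold same_set; rewrite forallb_forall; split.
  - intros H s.
    assert (Hs : In s [S0; SP; SN]) by (destruct s; simpl; auto).
    specialize (H s Hs); apply Bool.eqb_prop in H.
    rewrite <- !memb_spec, H; reflexivity.
  - intros H s _.
    apply Bool.eqb_true_iff, Bool.eq_iff_eq_true; rewrite !memb_spec; apply H.
Qed.

Lemma image_eq_same_set (D : diagram) (a : pt) (S : list sym) :
  image_eq D a S <-> same_set S (map D (Eset a)) = true.
Proof.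
  rewrite same_set_spec; unfold image_eq.
  split; intros H s; rewrite H, in_map_iff;
    split; intros [x [H1 H2]]; exists x; split; assumption.
Qed.

(* A node is determined by the three values x = D a, y = D (a - e1),
   z = D (a - e2): some value is nonzero and the nonzero values agree. *)
Definition nonzero (s : sym) : bool := match s with S0 => false | _ => true end.

Definition compat (s t : sym) : bool :=
  match s, t with SP, SN | SN, SP => false | _, _ => true end.

Definition nodeb (x y z : sym) : bool :=
  (nonzero x || nonzero y || nonzero z) && (compat x y && compat y z && compat x z).

Lemma nonzero_iff (s : sym) : nonzero s = true <-> s <> S0.
Proof. destruct s; simpl; split; congruence. Qed.

Lemma nonzero_false (s : sym) : nonzero s = false <-> s = S0.
Proof. destruct s; simpl; split; congruence. Qed.

Lemma compat_sym (s t : sym) : compat s t = compat t s.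
Proof. destruct s, t; reflexivity. Qed.

Lemma is_node_iff (D : diagram) (a : pt) :
  is_node D a <-> nodeb (D a) (D (fst a - 1, snd a)) (D (fst a, snd a - 1)) = true.
Proof.
  unfold is_node; rewrite !image_eq_same_set, <- !orb_true_iff.
  apply Bool.eq_iff_eq_true; unfold Eset; simpl map.
  destruct (D a), (D (fst a - 1, snd a)), (D (fst a, snd a - 1)); reflexivity.
Qed.

Definition erased_from (s s' : sym) : bool := negb (nonzero s) || sym_eqb s s'.

Lemma compat_erase (s t s' t' : sym) :
  erased_from s s' = true -> erased_from t t' = true ->
  compat s' t' = true -> compat s t = true.
Proof. unfold erased_from; destruct s, t, s', t'; simpl; intros; congruence. Qed.

Lemma nodeb_erase (x y z x' y' z' : sym) :
  erased_from x x' = true -> erased_from y y' = true -> erased_from z z' = true ->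
  nonzero x || nonzero y || nonzero z = true ->
  nodeb x' y' z' = true -> nodeb x y z = true.
Proof.
  unfold nodeb; intros Hx Hy Hz Hnz H.
  apply andb_true_iff in H as [_ H]; apply andb_true_iff in H as [H Hxz].
  apply andb_true_iff in H as [Hxy Hyz].
  rewrite Hnz, (compat_erase _ _ _ _ Hx Hy Hxy), (compat_erase _ _ _ _ Hy Hz Hyz),
    (compat_erase _ _ _ _ Hx Hz Hxz); reflexivity.
Qed.

Lemma nodeb_incompat (x y z : sym) :
  compat x y = false \/ compat y z = false \/ compat x z = false ->
  nodeb x y z = false.
Proof. intros H; destruct x, y, z; simpl in *; intuition congruence. Qed.

Definition flip (s : sym) : sym := match s with SP => SN | SN => SP | S0 => S0 end.

Definition alt (n : Z) (s : sym) : sym := if Z.even n then s else flip s.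

Lemma alt_nonzero (n : Z) (s : sym) : s <> S0 -> alt n s <> S0.
Proof. unfold alt; destruct (Z.even n), s; simpl; congruence. Qed.

Lemma alt_succ (n : Z) (s : sym) : s <> S0 -> compat (alt n s) (alt (n + 1) s) = false.
Proof.
  unfold alt; rewrite Z.even_add; simpl.
  destruct (Z.even n), s; simpl; congruence.
Qed.

Lemma adjacent_level (x y : pt) : adjacent x y -> absm x - 1 <= absm y <= absm x + 1.
Proof.
  destruct x as [x1 x2], y as [y1 y2]; unfold adjacent, absm; simpl.
  intros H; repeat destruct H as [H|H]; try inversion H; lia.
Qed.

Lemma last_cons_default {A : Type} (p : list A) (x y : A) : last (y :: p) x = last p y.
Proof.
  revert x y; induction p as [|z p IH]; intros x y; [reflexivity|].
  change (last (z :: p) x = last (z :: p) y); rewrite !IH; reflexivity.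
Qed.

Lemma path_meets_level (D : diagram) (k : Z) (p : list pt) (x : pt) :
  in_supp D x -> adj_path D x p -> absm x <= k -> k <= absm (last p x) ->
  exists z, in_supp D z /\ absm z = k.
Proof.
  revert x; induction p as [|y p IH]; intros x Hx Hp Hlo Hhi.
  - exists x; split; [exact Hx | simpl in Hhi; lia].
  - destruct Hp as [Hxy [Hy Hp]].
    destruct (Z.eq_dec (absm x) k) as [Heq|Hne]; [exists x; auto|].
    apply adjacent_level in Hxy; rewrite last_cons_default in Hhi.
    apply (IH y); auto; lia.
Qed.

Lemma num_nodes_le_of_injection (D1 D2 : diagram) (f : pt -> pt) (c1 c2 : nat) :
  (forall a, is_node D2 a -> is_node D1 (f a)) ->
  (forall a b, is_node D2 a -> is_node D2 b -> f a = f b -> a = b) ->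
  num_nodes D1 c1 -> num_nodes D2 c2 -> (c2 <= c1)%nat.
Proof.
  intros Hf Hinj [l1 [Hnd1 [Hl1 <-]]] [l2 [Hnd2 [Hl2 <-]]].
  rewrite <- (length_map f l2); apply NoDup_incl_length.
  - apply NoDup_map_NoDup_ForallPairs; [|exact Hnd2].
    intros a b Ha Hb; apply Hinj; apply Hl2; assumption.
  - intros y Hy; apply in_map_iff in Hy as [a [<- Ha]].
    apply Hl1, Hf, Hl2, Ha.
Qed.

Definition level_points (k : Z) : list pt :=
  map (fun i => (Z.of_nat i, k - Z.of_nat i)) (seq 0 (S (Z.to_nat k))).

Lemma in_level_points (k : Z) (p : pt) :
  absm p = k -> 0 <= fst p -> 0 <= snd p -> In p (level_points k).
Proof.
  destruct p as [x y]; unfold absm; cbn [fst snd]; intros Hk Hx Hy.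
  unfold level_points; apply in_map_iff; exists (Z.to_nat x); split.
  - rewrite Z2Nat.id by lia; f_equal; lia.
  - apply in_seq; lia.
Qed.

Section Filling.

Variables (D : diagram) (k : Z) (fill : Z -> sym).

Hypothesis supp_quadrant : forall p, in_supp D p -> 0 <= fst p /\ 0 <= snd p.
Hypothesis k_pos : 1 <= k.
Hypothesis lower_full :
  forall m, 0 <= fst m -> 0 <= snd m -> absm m <= k - 1 -> in_supp D m.
Hypothesis fill_nonzero : forall i, fill i <> S0.
Hypothesis fill_alternates : forall i, 1 <= i <= k ->
  D (i - 1, k - i + 1) = S0 -> D (i, k - i) = S0 -> compat (fill (i - 1)) (fill i) = false.
Hypothesis fill_first : D (0, k) = S0 -> compat (fill 0) (D (0, k - 1)) = false.
Hypothesis fill_last : D (k, 0) = S0 -> compat (fill k) (D (k - 1, 0)) = false.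

Definition gap (p : pt) : bool :=
  (absm p =? k) && (0 <=? fst p) && (0 <=? snd p) && negb (nonzero (D p)).

Definition filled (p : pt) : sym := if gap p then fill (fst p) else D p.

Lemma gap_spec (p : pt) :
  gap p = true <-> absm p = k /\ 0 <= fst p /\ 0 <= snd p /\ D p = S0.
Proof.
  unfold gap; rewrite !andb_true_iff, Z.eqb_eq, !Z.leb_le.
  destruct (D p); simpl; intuition congruence.
Qed.

Lemma filled_gap (p : pt) : gap p = true -> filled p = fill (fst p).
Proof. unfold filled; intros ->; reflexivity. Qed.

Lemma filled_outside (p : pt) : gap p = false -> filled p = D p.
Proof. unfold filled; intros ->; reflexivity. Qed.

Lemma D_outside (p : pt) : fst p < 0 \/ snd p < 0 -> D p = S0.
Proof.
  intros H; destruct (D p) eqn:E; [reflexivity| |];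
    assert (Hp : in_supp D p) by (unfold in_supp; congruence);
    apply supp_quadrant in Hp; lia.
Qed.

Lemma filled_erases (p : pt) : erased_from (D p) (filled p) = true.
Proof.
  unfold filled; destruct (gap p) eqn:G.
  - apply gap_spec in G as [_ [_ [_ ->]]]; reflexivity.
  - destruct (D p); reflexivity.
Qed.

Lemma filled_keep (p : pt) : in_supp D p -> filled p = D p.
Proof.
  intros Hp; apply filled_outside.
  destruct (gap p) eqn:G; [apply gap_spec in G; exfalso; apply Hp; tauto | reflexivity].
Qed.

Lemma filled_supp (p : pt) :
  in_supp filled p -> in_supp D p \/ (absm p = k /\ 0 <= fst p /\ 0 <= snd p).
Proof.
  intros Hp; destruct (gap p) eqn:G.
  - apply gap_spec in G; tauto.
  - left; unfold in_supp in *; rewrite <- (filled_outside p G); exact Hp.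
Qed.

Lemma filled_full (p : pt) :
  0 <= fst p -> 0 <= snd p -> absm p <= k -> in_supp filled p.
Proof.
  intros Hx Hy Hk; unfold in_supp.
  destruct (gap p) eqn:G; [rewrite filled_gap by exact G; apply fill_nonzero|].
  rewrite filled_outside by exact G.
  destruct (Z.eq_dec (absm p) k) as [Hl|Hl]; [|apply lower_full; lia].
  intros E; assert (gap p = true) by (apply gap_spec; auto); congruence.
Qed.

Lemma filled_extension : newton_diagram D -> extension filled D.
Proof.
  intros [[L HL] [[m Hm] _]].
  split; [split; [|split] | split].
  - exists (filter (fun p => nonzero (filled p)) (L ++ level_points k)).
    intros p; rewrite filter_In, in_app_iff, nonzero_iff; split.
    + intros Hp; split; [|exact Hp].
      destruct (filled_supp p Hp) as [H | [Hl [Hx Hy]]].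
      * left; apply HL, H.
      * right; apply in_level_points; assumption.
    + intros [_ Hp]; exact Hp.
  - exists m; unfold in_supp; rewrite filled_keep; assumption.
  - intros p Hp; destruct (filled_supp p Hp) as [H|H]; [apply supp_quadrant, H | tauto].
  - intros p Hp; unfold in_supp; rewrite filled_keep; assumption.
  - exact filled_keep.
Qed.

Lemma node_erase (a : pt) :
  nonzero (D a) || nonzero (D (fst a - 1, snd a)) || nonzero (D (fst a, snd a - 1)) = true ->
  is_node filled a -> is_node D a.
Proof.
  rewrite !is_node_iff; intros Hnz; apply nodeb_erase; [apply filled_erases .. | exact Hnz].
Qed.

(* When (0,k) is empty, E(0,k) is a node of D (its only value is D(0,k-1)),
   but not of the extension (fill 0 and D(0,k-1) disagree). *)
Lemma corner_node_left : D (0, k) = S0 -> is_node D (0, k).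
Proof.
  intros E; rewrite is_node_iff; cbn [fst snd].
  rewrite E, (D_outside (0 - 1, k)) by (simpl; lia).
  assert (Hs : in_supp D (0, k - 1)) by (apply lower_full; unfold absm; simpl; lia).
  unfold in_supp in Hs; destruct (D (0, k - 1)); [contradiction | reflexivity ..].
Qed.

Lemma corner_not_node_left : D (0, k) = S0 -> ~ is_node filled (0, k).
Proof.
  intros E; rewrite is_node_iff; cbn [fst snd].
  assert (G : gap (0, k) = true)
    by (apply gap_spec; unfold absm; simpl; repeat split; lia || exact E).
  assert (Hs : in_supp D (0, k - 1)) by (apply lower_full; unfold absm; simpl; lia).
  rewrite (filled_gap _ G), (filled_keep (0, k - 1) Hs), nodeb_incompat; [discriminate|].
  right; right; apply fill_first, E.
Qed.

Lemma corner_node_right : D (k, 0) = S0 -> is_node D (k, 0).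
Proof.
  intros E; rewrite is_node_iff; cbn [fst snd].
  rewrite E, (D_outside (k, 0 - 1)) by (simpl; lia).
  assert (Hs : in_supp D (k - 1, 0)) by (apply lower_full; unfold absm; simpl; lia).
  unfold in_supp in Hs; destruct (D (k - 1, 0)); [contradiction | reflexivity ..].
Qed.

Lemma corner_not_node_right : D (k, 0) = S0 -> ~ is_node filled (k, 0).
Proof.
  intros E; rewrite is_node_iff; cbn [fst snd].
  assert (G : gap (k, 0) = true)
    by (apply gap_spec; unfold absm; simpl; repeat split; lia || exact E).
  assert (Hs : in_supp D (k - 1, 0)) by (apply lower_full; unfold absm; simpl; lia).
  rewrite (filled_gap _ G), (filled_keep (k - 1, 0) Hs), nodeb_incompat; [discriminate|].
  left; apply fill_last, E.
Qed.

(* Every gap has an occupied lower neighbour, since level k-1 is full. *)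
Lemma gap_has_old_neighbour (x y : Z) :
  gap (x, y) = true -> D (x - 1, y) <> S0 \/ D (x, y - 1) <> S0.
Proof.
  intros G; apply gap_spec in G as [Hl [Hx [Hy _]]]; unfold absm in Hl; simpl in *.
  destruct (Z_le_gt_dec 1 x).
  - left; apply lower_full; unfold absm; simpl; lia.
  - right; apply lower_full; unfold absm; simpl; lia.
Qed.

Lemma new_node_corner (x y : Z) :
  D (x, y) = S0 -> D (x - 1, y) = S0 -> D (x, y - 1) = S0 ->
  is_node filled (x, y) ->
  ((x, y) = (0, k + 1) /\ D (0, k) = S0) \/ ((x, y) = (k + 1, 0) /\ D (k, 0) = S0).
Proof.
  intros E0 E1 E2 Hn; rewrite is_node_iff in Hn; cbn [fst snd] in Hn.
  assert (G0 : gap (x, y) = false).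
  { destruct (gap (x, y)) eqn:G; [|reflexivity].
    destruct (gap_has_old_neighbour x y G); contradiction. }
  rewrite (filled_outside _ G0), E0 in Hn.
  destruct (gap (x - 1, y)) eqn:G1, (gap (x, y - 1)) eqn:G2.
  - (* two consecutive new values cannot share a node *)
    rewrite (filled_gap _ G1), (filled_gap _ G2), nodeb_incompat in Hn; [discriminate|].
    apply gap_spec in G1 as [H1 [Hx1 [Hy1 _]]]; apply gap_spec in G2 as [H2 [Hx2 [Hy2 _]]].
    unfold absm in *; cbn [fst snd] in *.
    right; left; apply fill_alternates; [lia | |].
    + replace (k - x + 1) with y by lia; exact E1.
    + replace (k - x) with (y - 1) by lia; exact E2.
  - (* only (x-1,y) is new, so (x,y-1) has left the quadrant *)
    apply gap_spec in G1 as [H1 [Hx1 [Hy1 _]]]; unfold absm in H1; cbn [fst snd] in *.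
    assert (Hy : y = 0).
    { destruct (Z.eq_dec y 0) as [|Hy]; [assumption | exfalso].
      assert (gap (x, y - 1) = true)
        by (apply gap_spec; unfold absm; cbn [fst snd]; repeat split; lia || exact E2).
      congruence. }
    subst y; right; split; [f_equal; lia | replace k with (x - 1) by lia; exact E1].
  - (* only (x,y-1) is new, so (x-1,y) has left the quadrant *)
    apply gap_spec in G2 as [H2 [Hx2 [Hy2 _]]]; unfold absm in H2; cbn [fst snd] in *.
    assert (Hx : x = 0).
    { destruct (Z.eq_dec x 0) as [|Hx]; [assumption | exfalso].
      assert (gap (x - 1, y) = true)
        by (apply gap_spec; unfold absm; cbn [fst snd]; repeat split; lia || exact E1).
      congruence. }
    subst x; left; split; [f_equal; lia | replace k with (y - 1) by lia; exact E2].
  - rewrite (filled_outside _ G1), (filled_outside _ G2), E1, E2 in Hn; discriminate.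
Qed.

Definition pt_eqb (a b : pt) : bool := (fst a =? fst b) && (snd a =? snd b).

Lemma trade_cond_spec (a b : pt) (s : sym) :
  pt_eqb a b && negb (nonzero s) = true <-> a = b /\ s = S0.
Proof.
  destruct a as [x y], b as [u v]; unfold pt_eqb; cbn [fst snd].
  rewrite !andb_true_iff, !Z.eqb_eq.
  destruct s; simpl; split; intuition congruence.
Qed.

Definition retarget (a : pt) : pt :=
  if pt_eqb a (0, k + 1) && negb (nonzero (D (0, k))) then (0, k)
  else if pt_eqb a (k + 1, 0) && negb (nonzero (D (k, 0))) then (k, 0)
  else a.

Lemma retarget_spec (a : pt) :
  (a = (0, k + 1) /\ D (0, k) = S0 /\ retarget a = (0, k)) \/
  (a = (k + 1, 0) /\ D (k, 0) = S0 /\ retarget a = (k, 0)) \/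
  (~ (a = (0, k + 1) /\ D (0, k) = S0) /\ ~ (a = (k + 1, 0) /\ D (k, 0) = S0) /\
   retarget a = a).
Proof.
  unfold retarget.
  destruct (pt_eqb a (0, k + 1) && negb (nonzero (D (0, k)))) eqn:C1;
    [left; apply trade_cond_spec in C1; tauto|].
  destruct (pt_eqb a (k + 1, 0) && negb (nonzero (D (k, 0)))) eqn:C2;
    [right; left; apply trade_cond_spec in C2; tauto|].
  right; right; rewrite <- !trade_cond_spec, C1, C2; repeat split; discriminate.
Qed.

Lemma retarget_node (a : pt) : is_node filled a -> is_node D (retarget a).
Proof.
  destruct (retarget_spec a) as [[_ [E ->]] | [[_ [E ->]] | [N1 [N2 ->]]]]; intros Hn.
  - apply corner_node_left, E.
  - apply corner_node_right, E.
  - destruct (nonzero (D a) || nonzero (D (fst a - 1, snd a))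
              || nonzero (D (fst a, snd a - 1))) eqn:Hs; [apply node_erase; assumption|].
    exfalso; rewrite !orb_false_iff in Hs; destruct Hs as [[E0 E1] E2].
    rewrite !nonzero_false in E0, E1, E2.
    destruct a as [x y]; cbn [fst snd] in *.
    destruct (new_node_corner x y E0 E1 E2 Hn); tauto.
Qed.

(* Injectivity: a corner only receives a node when it is itself not a node. *)
Lemma retarget_injective (a b : pt) :
  is_node filled a -> is_node filled b -> retarget a = retarget b -> a = b.
Proof.
  intros Ha Hb.
  destruct (retarget_spec a) as [[-> [Ea ->]] | [[-> [Ea ->]] | [_ [_ ->]]]];
  destruct (retarget_spec b) as [[-> [Eb ->]] | [[-> [Eb ->]] | [_ [_ ->]]]];
  intros E; try reflexivity; try (injection E; lia); subst.
  - exfalso; exact (corner_not_node_left Ea Hb).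
  - exfalso; exact (corner_not_node_right Ea Hb).
  - exfalso; exact (corner_not_node_left Eb Ha).
  - exfalso; exact (corner_not_node_right Eb Ha).
  - reflexivity.
Qed.

Lemma filled_fewer_nodes (c c' : nat) :
  num_nodes D c -> num_nodes filled c' -> (c' <= c)%nat.
Proof.
  apply (num_nodes_le_of_injection D filled retarget).
  - exact retarget_node.
  - exact retarget_injective.
Qed.

End Filling.

Section Zigzag.

Variables (D : diagram) (k m0 : Z).

Hypothesis m0_range : 0 <= m0 <= k.
Hypothesis m0_occupied : in_supp D (m0, k - m0).
Hypothesis start_nonzero : D (0, k - 1) <> S0.
Hypothesis end_nonzero : D (k - 1, 0) <> S0.

Definition zigzag (i : Z) : sym :=
  if i <? m0 then alt (i + 1) (D (0, k - 1)) else alt (k - i + 1) (D (k - 1, 0)).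

Lemma zigzag_nonzero (i : Z) : zigzag i <> S0.
Proof. unfold zigzag; destruct (i <? m0); apply alt_nonzero; assumption. Qed.

Lemma zigzag_alternates (i : Z) : 1 <= i <= k ->
  D (i - 1, k - i + 1) = S0 -> D (i, k - i) = S0 ->
  compat (zigzag (i - 1)) (zigzag i) = false.
Proof.
  intros _ E1 E2; unfold zigzag.
  assert (Hi : i <> m0) by (intros ->; contradiction).
  assert (Hi1 : i - 1 <> m0)
    by (intros <-; apply m0_occupied; replace (k - (i - 1)) with (k - i + 1) by lia; exact E1).
  destruct (Z.ltb_spec (i - 1) m0), (Z.ltb_spec i m0); try lia.
  - replace (i - 1 + 1) with i by lia; apply alt_succ, start_nonzero.
  - rewrite compat_sym; replace (k - (i - 1) + 1) with (k - i + 1 + 1) by lia.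
    apply alt_succ, end_nonzero.
Qed.

Lemma zigzag_first : D (0, k) = S0 -> compat (zigzag 0) (D (0, k - 1)) = false.
Proof.
  intros E; unfold zigzag.
  assert (Hm0 : 0 < m0).
  { destruct (Z.eq_dec m0 0) as [->|]; [|lia].
    replace (k - 0) with k in * by lia; contradiction. }
  destruct (Z.ltb_spec 0 m0); [|lia].
  rewrite compat_sym; exact (alt_succ 0 _ start_nonzero).
Qed.

Lemma zigzag_last : D (k, 0) = S0 -> compat (zigzag k) (D (k - 1, 0)) = false.
Proof.
  intros _; unfold zigzag.
  destruct (Z.ltb_spec k m0); [lia|].
  replace (k - k + 1) with (0 + 1) by lia; rewrite compat_sym; exact (alt_succ 0 _ end_nonzero).
Qed.

End Zigzag.

Lemma level_point (D : diagram) (d k : Z) :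
  newton_diagram D -> supp_size D d -> supp_connected D -> in_supp D (0, 0) ->
  0 <= k < d -> exists m0, 0 <= m0 <= k /\ in_supp D (m0, k - m0).
Proof.
  intros [_ [_ Hquad]] Hsize Hconn H00 Hk.
  destruct Hsize as [kmax [a1 [a2 [[w [Hw Hwk]] [_ [[u1 [Hu1 <-]] [Ha1
    [[u2 [Hu2 <-]] [Ha2 ->]]]]]]]]].
  specialize (Ha1 _ H00); specialize (Ha2 _ H00).
  apply Hquad in Hu1; apply Hquad in Hu2; cbn [fst snd] in *.
  destruct (Hconn (0, 0) w H00 Hw) as [p [Hp Hlast]].
  destruct (path_meets_level D k p (0, 0) H00 Hp) as [[x y] [Hz Hzk]];
    [unfold absm; simpl; lia | rewrite Hlast; lia |].
  exists x; pose proof (Hquad _ Hz); unfold absm in Hzk; cbn [fst snd] in *.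
  split; [lia | replace (k - x) with y by lia; exact Hz].
Qed.

Theorem mainTheorem6 (D : diagram) (d k : Z) :
  newton_diagram D ->
  supp_size D d ->
  supp_connected D ->
  in_supp D (0, 0) ->
  k < d ->
  (forall m : pt, 0 <= fst m -> 0 <= snd m -> absm m <= k - 1 -> in_supp D m) ->
  exists D' : diagram,
    extension D' D /\
    (forall c c' : nat, num_nodes D c -> num_nodes D' c' -> (c' <= c)%nat) /\
    (forall m : pt, 0 <= fst m -> 0 <= snd m -> absm m <= k -> in_supp D' m).
Proof.
  intros HD Hsize Hconn H00 Hkd Hlow.
  pose proof (proj2 (proj2 HD)) as Hquad.
  destruct (Z_le_gt_dec k 0) as [Hk | Hk].
  - (* the triangle |m| <= k is at most {(0,0)}, so D itself will do *)
    exists D; split; [|split].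
    + split; [exact HD | split; [intros m Hm; exact Hm | reflexivity]].
    + intros c c'; apply (num_nodes_le_of_injection D D (fun a => a)); auto.
    + intros [x y] Hx Hy Hxy; unfold absm in Hxy; cbn [fst snd] in *.
      replace (x, y) with (0, 0) by (f_equal; lia); exact H00.
  - destruct (level_point D d k HD Hsize Hconn H00) as [m0 [Hm0 Hocc]]; [lia|].
    assert (Hs0 : in_supp D (0, k - 1)) by (apply Hlow; unfold absm; simpl; lia).
    assert (Hs1 : in_supp D (k - 1, 0)) by (apply Hlow; unfold absm; simpl; lia).
    exists (filled D k (zigzag D k m0)); split; [|split].
    + apply filled_extension; assumption.
    + apply filled_fewer_nodes; try assumption; try lia.
      * apply zigzag_alternates; assumption.
      * apply zigzag_first; assumption.
      * apply zigzag_last; assumption.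
    + apply filled_full; [assumption |].
      apply zigzag_nonzero; assumption.
Qed.
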